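(* Fix a $C^0$-concept over a topologized field $\mathbb{K}$. Let $E,F\in\mathcal{M}$, $U\subseteq E$ open, $f\in C^0(U,F)$, and suppose there exists a $C^0$-map $g\colon P\to F$ defined on an open neighbourhood $P$ of $U\times E\times\{0\}$ in $U^{[1]}$ such that $g(x,y,t)=\frac{f(x+ty)-f(x)}{t}$ for all $(x,y,t)\in P$ with $t\ne0$. Then $f$ is of class $C^1$ and $g=f^{[1]}|_P$.
   Context: Let $\mathbb{K}$ be a commutative ring with unit (here a field) carrying a topology. A $C^0$-concept over $\mathbb{K}$ consists of: (a) a class $\mathcal{M}$ of topologized $\mathbb{K}$-modules with $\mathbb{K}\in\mathcal{M}$; (b) for $E,F\in\mathcal{M}$ and open $U\subseteq E$, a set $C^0(U,F)$ of continuous maps; (c) for $E_1,E_2\in\mathcal{M}$ a topology on $E_1\times E_2$ (not necessarily the product topology) making it a member of $\mathcal{M}$; subject to: (I.1) composites of $C^0$-maps are $C^0$, identities and inclusions of open subsets are $C^0$; (I.2) $x\mapsto rx+b$ is $C^0$; (I.3) $t\mapsto tv+x$ is $C^0$; (I.4) $\mathbb{K}^\times$ is open and inversion is $C^0$; (I.5) a map which is $C^0$ on each member of an open cover of its domain is $C^0$; (II.1) projections and $v\mapsto(v,y)$, $w\mapsto(x,w)$ are $C^0$; (II.2) $f_1\times f_2$ is $C^0$ for $C^0$-maps $f_i$; (II.3) diagonals are $C^0$; (II.4) exchange/associativity maps of products are $C^0$ both ways; (II.5) addition and scalar multiplication are $C^0$; (III) a $C^0$-map on open $U\subseteq\mathbb{K}$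 is determined by its values on $U\cap\mathbb{K}^\times$. $U^{[1]}:=\{(x,v,t)\in U\times E\times\mathbb{K}:x+tv\in U\}$, open in $E\times E\times\mathbb{K}$. A $C^0$-map $f$ is $C^1$ if there is a $C^0$-map $f^{[1]}\colon U^{[1]}\to F$ with $f(x+tv)-f(x)=t\,f^{[1]}(x,v,t)$ for all $(x,v,t)\in U^{[1]}$. *)

From mathcomp Require Import all_boot all_algebra.
From mathcomp Require Import classical_sets.

Set Implicit Arguments.
Unset Strict Implicit.
Unset Printing Implicit Defensive.

Import GRing.Theory.
Local Open Scope ring_scope.
Local Open Scope classical_set_scope.

Definition is_topology (X : Type) (O : set (set X)) : Prop :=
  [/\ O set0, O setT,
      (forall A B, O A -> O B -> O (A `&` B)) &
      (forall (I : Type) (F : I -> set X), (forall i, O (F i)) ->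
         O (\bigcup_i F i))].

Record topmod (K : fieldType) := TopMod {
  tm_car :> lmodType K;
  tm_open : set (set tm_car) }.
Arguments TopMod {K}.
Arguments tm_open {K} t _.

Definition KTM (K : fieldType) (tK : set (set K)) : topmod K := TopMod K^o tK.

(* The product E1 x E2 with a chosen (not necessarily product) topology. *)
Definition PTM (K : fieldType)
  (ptop : forall E1 E2 : topmod K, set (set (E1 * E2)%type))
  (E1 E2 : topmod K) : topmod K :=
  TopMod (E1 * E2)%type (ptop E1 E2).

Definition cont_on (K : fieldType) (E F : topmod K) (U : set E) (f : E -> F) :=
  forall O, tm_open F O -> tm_open E (U `&` f @^-1` O).

(* A map U -> F (U open in E) is represented by any total function E -> F;
   only its values on U matter (axiom c_ext). *)
Unset Implicit Arguments.
Record C0Concept (K : fieldType) := {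
  c_topK : set (set K);
  c_mem : topmod K -> Prop;
  c_ptop : forall E1 E2 : topmod K, set (set (E1 * E2)%type);
  c_C0 : forall E F : topmod K, set E -> (E -> F) -> Prop;
  c_topK_top : is_topology c_topK;
  c_mem_top : forall E, c_mem E -> is_topology (tm_open E);
  c_mem_K : c_mem (KTM c_topK);
  c_mem_prod : forall E1 E2, c_mem E1 -> c_mem E2 -> c_mem (PTM c_ptop E1 E2);
  c_C0_open : forall E F U f, c_mem E -> c_mem F -> c_C0 E F U f -> tm_open E U;
  c_C0_cont : forall E F U f, c_mem E -> c_mem F -> c_C0 E F U f -> cont_on U f;
  c_ext : forall (E F : topmod K) (U : set E) (f g : E -> F), c_mem E -> c_mem F ->
    (forall x, U x -> f x = g x) -> c_C0 E F U f -> c_C0 E F U g;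
  c_comp : forall (E F G : topmod K) (U : set E) (V : set F) (f : E -> F) (g : F -> G),
    c_mem E -> c_mem F -> c_mem G -> c_C0 E F U f -> c_C0 F G V g ->
    (forall x, U x -> V (f x)) -> c_C0 E G U (g \o f);
  c_id_incl : forall (E : topmod K) (U : set E), c_mem E -> tm_open E U -> c_C0 E E U id;
  c_affine : forall (E : topmod K) (r : K) (b : E), c_mem E ->
    c_C0 E E setT (fun x => r *: x + b);
  c_line : forall (E : topmod K) (v x : E), c_mem E ->
    c_C0 (KTM c_topK) E setT (fun t : K^o => t *: v + x);
  c_units_open : c_topK [set t | t != 0];
  c_inv : c_C0 (KTM c_topK) (KTM c_topK) [set t | t != 0]
            (fun t : K^o => (t^-1 : K^o));
  c_local : forall (E F : topmod K) (U : set E) (f : E -> F) (I : Type) (Ui : I -> set E),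
    c_mem E -> c_mem F -> (forall i, tm_open E (Ui i)) ->
    U = \bigcup_i Ui i -> (forall i, c_C0 E F (Ui i) f) -> c_C0 E F U f;
  c_fst : forall E1 E2, c_mem E1 -> c_mem E2 ->
    c_C0 (PTM c_ptop E1 E2) E1 setT (fun p : (E1 * E2)%type => p.1);
  c_snd : forall E1 E2, c_mem E1 -> c_mem E2 ->
    c_C0 (PTM c_ptop E1 E2) E2 setT (fun p : (E1 * E2)%type => p.2);
  c_inl : forall (E1 E2 : topmod K) (y : E2), c_mem E1 -> c_mem E2 ->
    c_C0 E1 (PTM c_ptop E1 E2) setT (fun v : E1 => (v, y));
  c_inr : forall (E1 E2 : topmod K) (x : E1), c_mem E1 -> c_mem E2 ->
    c_C0 E2 (PTM c_ptop E1 E2) setT (fun w : E2 => (x, w));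
  c_prod_map : forall (E1 E2 F1 F2 : topmod K) (U1 : set E1) (U2 : set E2)
      (f1 : E1 -> F1) (f2 : E2 -> F2),
    c_mem E1 -> c_mem E2 -> c_mem F1 -> c_mem F2 ->
    c_C0 E1 F1 U1 f1 -> c_C0 E2 F2 U2 f2 ->
    c_C0 (PTM c_ptop E1 E2) (PTM c_ptop F1 F2) (U1 `*` U2)
      (fun p : (E1 * E2)%type => ((f1 p.1, f2 p.2) : (F1 * F2)%type));
  c_diag : forall E, c_mem E ->
    c_C0 E (PTM c_ptop E E) setT (fun x : E => (x, x));
  c_swap : forall E1 E2, c_mem E1 -> c_mem E2 ->
    c_C0 (PTM c_ptop E1 E2) (PTM c_ptop E2 E1) setT
      (fun p : (E1 * E2)%type => ((p.2, p.1) : (E2 * E1)%type));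
  c_assoc : forall E1 E2 E3, c_mem E1 -> c_mem E2 -> c_mem E3 ->
    c_C0 (PTM c_ptop (PTM c_ptop E1 E2) E3) (PTM c_ptop E1 (PTM c_ptop E2 E3))
      setT (fun p : ((E1 * E2) * E3)%type =>
              ((p.1.1, (p.1.2, p.2)) : (E1 * (E2 * E3))%type));
  c_assoc_inv : forall E1 E2 E3, c_mem E1 -> c_mem E2 -> c_mem E3 ->
    c_C0 (PTM c_ptop E1 (PTM c_ptop E2 E3)) (PTM c_ptop (PTM c_ptop E1 E2) E3)
      setT (fun p : (E1 * (E2 * E3))%type =>
              (((p.1, p.2.1), p.2.2) : ((E1 * E2) * E3)%type));
  c_add : forall E, c_mem E ->
    c_C0 (PTM c_ptop E E) E setT (fun p : (E * E)%type => p.1 + p.2);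
  c_scale : forall E, c_mem E ->
    c_C0 (PTM c_ptop (KTM c_topK) E) E setT
      (fun p : (K^o * E)%type => p.1 *: p.2);
  c_III : forall (F : topmod K) (U : set K^o) (f g : K^o -> F), c_mem F ->
    c_topK U -> c_C0 (KTM c_topK) F U f -> c_C0 (KTM c_topK) F U g ->
    (forall t, U t -> t != 0 -> f t = g t) -> forall t, U t -> f t = g t
}.

Set Implicit Arguments.
Arguments c_C0 {K} c E F _ _.
Arguments c_mem {K} c _.
Arguments c_ptop {K} c E1 E2 _.
Arguments c_topK {K} c _.

Section C1.
Variables (K : fieldType) (C : C0Concept K).

Definition E3 (E : topmod K) : topmod K :=
  PTM (c_ptop C) (PTM (c_ptop C) E E) (KTM (c_topK C)).

Definition Ubr (E : topmod K) (U : set E) : set ((E * E) * K^o)%type :=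
  [set p | U p.1.1 /\ U (p.1.1 + p.2 *: p.1.2)].

Definition is_f1 (E F : topmod K) (U : set E) (f : E -> F)
  (f1 : ((E * E) * K^o)%type -> F) : Prop :=
  c_C0 C (E3 E) F (Ubr U) f1 /\
  forall (x v : E) (t : K), Ubr U ((x, v), t) ->
    f (x + t *: v) - f x = t *: f1 ((x, v), t).

Definition isC1 (E F : topmod K) (U : set E) (f : E -> F) : Prop :=
  c_C0 C E F U f /\ exists f1, is_f1 U f f1.

End C1.

(* Off t = 0 the difference quotient of f is C^0 on the open set
   U^[1] & {t != 0}, and there it agrees with g.  Since P contains U x E x {0},
   these two open sets cover U^[1], so by locality (I.5) g and the difference
   quotient glue to a C^0 map f^[1].  Conversely any f^[1] coincides with g on
   P off t = 0, hence on all of P by (III) applied along each line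
   s |-> (x, y, s). *)

From mathcomp Require Import all_boot all_algebra.
From mathcomp Require Import classical_sets boolp functions.
Import GRing.Theory.
Local Open Scope ring_scope.
Local Open Scope classical_set_scope.

Set Implicit Arguments.
Unset Strict Implicit.
Unset Printing Implicit Defensive.

Section C0Calculus.
Variables (K : fieldType) (C : C0Concept K).

Local Notation C0 := (c_C0 C).
Local Notation KK := (KTM (c_topK C)).
Local Notation Prod := (PTM (c_ptop C)).

#[local] Arguments c_mem_K {K} c.
#[local] Arguments c_units_open {K} c.
#[local] Arguments c_inv {K} c.
#[local] Arguments c_mem_top {K c E}.
#[local] Arguments c_mem_prod {K c E1 E2}.
#[local] Arguments c_C0_open {K c E F U f}.
#[local] Arguments c_C0_cont {K c E F U f}.
#[local] Arguments c_ext {K c E F U f g}.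
#[local] Arguments c_comp {K c E F G U V f g}.
#[local] Arguments c_id_incl {K c E U}.
#[local] Arguments c_affine {K c E} r b.
#[local] Arguments c_local {K c E F U f I Ui}.
#[local] Arguments c_fst {K c E1 E2}.
#[local] Arguments c_snd {K c E1 E2}.
#[local] Arguments c_inr {K c E1 E2} x.
#[local] Arguments c_prod_map {K c E1 E2 F1 F2 U1 U2 f1 f2}.
#[local] Arguments c_diag {K c E}.
#[local] Arguments c_add {K c E}.
#[local] Arguments c_scale {K c E}.
#[local] Arguments c_III {K c F U f g}.

Lemma open_setI (E : topmod K) (A B : set E) : c_mem C E ->
  tm_open E A -> tm_open E B -> tm_open E (A `&` B).
Proof. by move=> mE; case: (c_mem_top mE) => _ _ + _; apply. Qed.

Lemma open_setT (E : topmod K) : c_mem C E -> tm_open E setT.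
Proof. by move=> mE; case: (c_mem_top mE). Qed.

Lemma C0_open_preimage (E F : topmod K) (f : E -> F) (O : set F) :
  c_mem C E -> c_mem C F -> C0 E F setT f -> tm_open F O ->
  tm_open E (f @^-1` O).
Proof. by move=> mE mF hf /(c_C0_cont mE mF hf); rewrite setTI. Qed.

Lemma C0_restrict (E F : topmod K) (U V : set E) (f : E -> F) :
  c_mem C E -> c_mem C F -> C0 E F U f -> tm_open E V -> V `<=` U ->
  C0 E F V f.
Proof. by move=> mE mF hf oV; exact: (c_comp mE mE mF (c_id_incl mE oV) hf). Qed.

Lemma C0_compT (E F G : topmod K) (U : set E) (f : E -> F) (g : F -> G) :
  c_mem C E -> c_mem C F -> c_mem C G -> C0 E F U f -> C0 F G setT g ->
  C0 E G U (g \o f).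
Proof. by move=> mE mF mG hf hg; exact: (c_comp mE mF mG hf hg (fun _ _ => I)). Qed.

Lemma C0_pair (E A B : topmod K) (W : set E) (a : E -> A) (b : E -> B) :
  c_mem C E -> c_mem C A -> c_mem C B -> tm_open E W ->
  C0 E A W a -> C0 E B W b -> C0 E (Prod A B) W (fun x => (a x, b x)).
Proof.
move=> mE mA mB oW ha hb.
have mEE := c_mem_prod mE mE.
have hdiag := C0_restrict mE mEE (c_diag mE) oW (@subsetT _ _).
exact: (c_comp mE mEE (c_mem_prod mA mB) hdiag (c_prod_map mE mE mA mB ha hb)
  (fun x Wx => conj Wx Wx)).
Qed.

Section PointwiseOperations.
Variables (E A : topmod K) (W : set E).
Hypotheses (mE : c_mem C E) (mA : c_mem C A) (oW : tm_open E W).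

Lemma C0_addf (a b : E -> A) :
  C0 E A W a -> C0 E A W b -> C0 E A W (fun x => a x + b x).
Proof.
move=> ha hb.
exact: (C0_compT mE (c_mem_prod mA mA) mA (C0_pair mE mA mA oW ha hb) (c_add mA)).
Qed.

Lemma C0_oppf (a : E -> A) : C0 E A W a -> C0 E A W (fun x => - a x).
Proof.
move=> ha; apply: (c_ext mE mA _ (C0_compT mE mA mA ha (c_affine (-1) 0 mA))).
by move=> x _ /=; rewrite addr0 scaleN1r.
Qed.

Lemma C0_scalef (s : E -> K^o) (a : E -> A) :
  C0 E KK W s -> C0 E A W a -> C0 E A W (fun x => s x *: a x).
Proof.
have mK := c_mem_K C; move=> hs ha.
exact: (C0_compT mE (c_mem_prod mK mA) mA (C0_pair mE mK mA oW hs ha) (c_scale mA)).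
Qed.

End PointwiseOperations.

Lemma C0_patch (E F : topmod K) (A B : set E) (f g : E -> F) :
  c_mem C E -> c_mem C F -> tm_open E A -> tm_open E B ->
  C0 E F A f -> C0 E F B g -> (forall x, A x -> B x -> f x = g x) ->
  C0 E F (A `|` B) (patch g A f).
Proof.
move=> mE mF oA oB hf hg fg.
apply: (c_local mE mF (Ui := fun b : bool => if b then A else B)).
- by case.
- apply/seteqP; split=> [x [Ax|Bx]|x [[] _ ?]]; by [exists true|exists false|left|right].
- case; [apply: (c_ext mE mF _ hf) => x Ax | apply: (c_ext mE mF _ hg) => x Bx].
    by rewrite patchT ?inE.
  by rewrite /patch; case: ifPn => // /set_mem Ax; rewrite fg.
Qed.

(* (III) applied along each line s |-> (x, s). *)
Lemma C0_eq_off_zero (E1 F : topmod K) (P : set (Prod E1 KK)) (h1 h2 : E1 * K^o -> F) :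
  c_mem C E1 -> c_mem C F -> tm_open (Prod E1 KK) P ->
  C0 (Prod E1 KK) F P h1 -> C0 (Prod E1 KK) F P h2 ->
  (forall p, P p -> p.2 != 0 -> h1 p = h2 p) -> forall p, P p -> h1 p = h2 p.
Proof.
move=> mE1 mF oP hh1 hh2 h12 [x t] Pxt.
have mK := c_mem_K C; have mEK := c_mem_prod mE1 mK.
have hline : C0 KK (Prod E1 KK) setT (fun s : K^o => (x, s)) := c_inr x mE1 mK.
have oV := C0_open_preimage mK mEK hline oP.
have hlineV := C0_restrict mK mEK hline oV (@subsetT _ _).
apply: (c_III mF oV (c_comp mK mEK mF hlineV hh1 (fun _ => id))
                    (c_comp mK mEK mF hlineV hh2 (fun _ => id))) => // s Ps s0.
exact: h12.
Qed.

Section DifferenceQuotient.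
Variables (E F : topmod K).
Hypotheses (mE : c_mem C E) (mF : c_mem C F).

(* Only meaningful for p.2 != 0; at p.2 = 0 it is 0 since 0^-1 = 0. *)
Definition diff_quot (f : E -> F) (p : (E * E) * K^o) : F :=
  p.2^-1 *: (f (p.1.1 + p.2 *: p.1.2) - f p.1.1).

Definition Ubr_nz (U : set E) : set ((E * E) * K^o) := Ubr U `&` [set p | p.2 != 0].

Let mEE := c_mem_prod mE mE.
Let mK := c_mem_K C.
Let mE3 : c_mem C (E3 C E) := c_mem_prod mEE mK.

Lemma C0_base : C0 (E3 C E) E setT (fun p => p.1.1).
Proof. exact: (C0_compT mE3 mEE mE (c_fst mEE mK) (c_fst mE mE)). Qed.

Lemma C0_dir : C0 (E3 C E) E setT (fun p => p.1.2).
Proof. exact: (C0_compT mE3 mEE mE (c_fst mEE mK) (c_snd mE mE)). Qed.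

Lemma C0_shift : C0 (E3 C E) E setT (fun p => p.1.1 + p.2 *: p.1.2).
Proof.
have oT := open_setT mE3.
exact: (C0_addf mE3 mE oT C0_base (C0_scalef mE3 mE oT (c_snd mEE mK) C0_dir)).
Qed.

Lemma open_Ubr_nz (U : set E) : tm_open E U -> tm_open (E3 C E) (Ubr_nz U).
Proof.
move=> oU; apply: (open_setI mE3); first apply: (open_setI mE3).
- exact: (C0_open_preimage mE3 mE C0_base oU).
- exact: (C0_open_preimage mE3 mE C0_shift oU).
- exact: (C0_open_preimage mE3 mK (c_snd mEE mK) (c_units_open C)).
Qed.

Lemma C0_diff_quot (U : set E) (f : E -> F) :
  C0 E F U f -> C0 (E3 C E) F (Ubr_nz U) (diff_quot f).
Proof.
move=> hf; have oW := open_Ubr_nz (c_C0_open mE mF hf).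
have restr3 (A : topmod K) (h : E3 C E -> A) :
    c_mem C A -> C0 (E3 C E) A setT h -> C0 (E3 C E) A (Ubr_nz U) h.
  by move=> mA hh; exact: (C0_restrict mE3 mA hh oW (@subsetT _ _)).
have hinv : C0 (E3 C E) KK (Ubr_nz U) (fun p => (p.2^-1 : K^o)).
  exact: (c_comp mE3 mK mK (restr3 _ _ mK (c_snd mEE mK)) (c_inv C) (fun p Wp => Wp.2)).
have hfshift : C0 (E3 C E) F (Ubr_nz U) (fun p => f (p.1.1 + p.2 *: p.1.2)).
  exact: (c_comp mE3 mE mF (restr3 _ _ mE C0_shift) hf (fun p Wp => Wp.1.2)).
have hfbase : C0 (E3 C E) F (Ubr_nz U) (fun p => f p.1.1).
  exact: (c_comp mE3 mE mF (restr3 _ _ mE C0_base) hf (fun p Wp => Wp.1.1)).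
exact: (C0_scalef mE3 mF oW hinv (C0_addf mE3 mF oW hfshift (C0_oppf mE3 mF hfbase))).
Qed.

Lemma diff_quotK (f : E -> F) (x v : E) (t : K) : t != 0 ->
  t *: diff_quot f ((x, v), t) = f (x + t *: v) - f x.
Proof. by move=> t0; rewrite /diff_quot /= scalerA mulfV // scale1r. Qed.

Lemma is_f1_diff_quot (U : set E) (f : E -> F) f1 :
  is_f1 C U f f1 -> forall p, Ubr_nz U p -> f1 p = diff_quot f p.
Proof.
case=> _ ef1 [[x v] t] [Up /= t0].
by rewrite /diff_quot /= ef1 // scalerA mulVf // scale1r.
Qed.

Lemma is_f1_patch_diff_quot (U : set E) (f : E -> F) P g :
  C0 E F U f -> tm_open (E3 C E) P -> P `<=` Ubr U ->
  (forall x y, U x -> P ((x, y), 0)) -> C0 (E3 C E) F P g ->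
  (forall p, P p -> p.2 != 0 -> g p = diff_quot f p) ->
  is_f1 C U f (patch (diff_quot f) P g).
Proof.
move=> hf oP PU P0 hg gE.
have UbrE : Ubr U = P `|` Ubr_nz U.
  apply/seteqP; split=> [[[x y] t] Uxyt|p [/PU //|[]//]].
  by have [->|t0] := eqVneq t 0; [left; exact: (P0 _ _ Uxyt.1)|right].
split.
  rewrite /= UbrE.
  apply: (C0_patch mE3 mF oP (open_Ubr_nz (c_C0_open mE mF hf)) hg (C0_diff_quot hf)).
  by move=> p Pp [_ t0]; exact: gE.
move=> x v t _; have [->|t0] := eqVneq t 0; first by rewrite !scale0r addr0 subrr.
rewrite -diff_quotK //; congr (_ *: _).
by rewrite /patch; case: ifPn => // /set_mem Pp; rewrite gE.
Qed.

Lemma is_f1_eq_on (U : set E) (f : E -> F) P g f1 :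
  tm_open (E3 C E) P -> P `<=` Ubr U -> C0 (E3 C E) F P g ->
  (forall p, P p -> p.2 != 0 -> g p = diff_quot f p) ->
  is_f1 C U f f1 -> forall p, P p -> f1 p = g p.
Proof.
move=> oP PU hg gE hf1.
have hf1P : C0 (E3 C E) F P f1.
  by case: hf1 => hf1 _; exact: (C0_restrict mE3 mF hf1 oP PU).
apply: (C0_eq_off_zero mEE mF oP hf1P hg) => p Pp t0.
by rewrite gE // (is_f1_diff_quot hf1) //; split=> //; exact: PU.
Qed.

End DifferenceQuotient.

End C0Calculus.

Theorem lemma2p6 (K : fieldType) (C : C0Concept K) (E F : topmod K)
  (U : set E) (f : E -> F)
  (P : set ((E * E) * K^o)%type) (g : ((E * E) * K^o)%type -> F) :
  c_mem C E -> c_mem C F -> tm_open E U -> c_C0 C E F U f ->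
  tm_open (E3 C E) P -> P `<=` Ubr U ->
  (forall (x y : E), U x -> P ((x, y), 0)) ->
  c_C0 C (E3 C E) F P g ->
  (forall (x y : E) (t : K), P ((x, y), t) -> t != 0 ->
     g ((x, y), t) = t^-1 *: (f (x + t *: y) - f x)) ->
  isC1 C U f /\
  (forall f1, is_f1 C U f f1 -> forall p, P p -> f1 p = g p).
Proof.
move=> mE mF _ hf oP PU P0 hg gE.
have gE' p : P p -> p.2 != 0 -> g p = diff_quot f p.
  by case: p => [[x y] t]; exact: gE.
split.
  by split=> //; eexists; exact: (is_f1_patch_diff_quot mE mF hf oP PU P0 hg gE').
by move=> f1 /(is_f1_eq_on mE mF oP PU hg gE').
Qed.
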